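(* Let $\overline{\mathcal{O}}$, $\varphi$ be as in the context, let $K$ be a complete non-Archimedean field, and let $F:\overline{\mathcal{O}}\to K$ be a continuous non-vanishing function. Suppose that for all $n\in\mathbb{N}$ and all $\mathbf{x}=(\mathbf{x}_t)_t\in\overline{\mathcal{O}}$ with $|\mathbf{x}_t|<1$ for all $t$, $$\varphi^{(n)}(\mathbf{x})=\mathbf{x}\ \Longrightarrow\ \prod_{j=0}^{n-1}F\left(\varphi^{(j)}(\mathbf{x})\right)=1.$$ Then there exists a continuous non-vanishing function $G:\overline{\mathcal{O}}\to K$ such that $F(\mathbf{x})=\dfrac{G(\mathbf{x})}{G(\varphi(\mathbf{x}))}$ for all $\mathbf{x}\in\overline{\mathcal{O}}$.
   Context: Let $q$ be a prime power, $A=\mathbb{F}_q[\theta]$, $k=\mathbb{F}_q(\theta)$. Let $\mathcal{O}=\prod_t\mathcal{O}_t$ be a finite product with each $\mathcal{O}_t\in\{\mathbb{Z},A\}$; for each $t$ fix a prime number $p_t$ (if $\mathcal{O}_t=\mathbb{Z}$, with $\overline{\mathcal{O}}_t=\mathbb{Z}_{p_t}$) or a monic irreducible $v_t\in A$ (if $\mathcal{O}_t=A$, with $\overline{\mathcal{O}}_t=A_{v_t}$ the $v_t$-adic completion), and $\overline{\mathcal{O}}=\prod_t\overline{\mathcal{O}}_t$. Fix $\pi_t$ a positive power of $p_t$ resp. $v_t$. Each $\mathbf{x}_t\in\overline{\mathcal{O}}_t$ is uniquely $\sum_{i\ge0}x_{t,i}\pi_t^i$ with integer digits $0\le x_{t,i}<\pi_t$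 (case $\mathbb{Z}$) or polynomial digits of degree $<\deg\pi_t$ (case $A$); $\varphi_t(\mathbf{x}_t)=\sum_{i\ge0}x_{t,i+1}\pi_t^i$ and $\varphi(\mathbf{x})=(\varphi_t(\mathbf{x}_t))_t$; $\varphi^{(j)}$ is the $j$-fold iterate. If $\varphi^{(n)}(\mathbf{x})=\mathbf{x}$ then each component $\mathbf{x}_t$ is an element of $\mathbb{Q}$ resp. $k$ (a ratio of an element of $\mathcal{O}_t$ and $1-\pi_t^n$); here $|\cdot|$ denotes the usual real absolute value on $\mathbb{Q}$ and the $\infty$-adic absolute value $|f/g|=q^{\deg f-\deg g}$ on $k$. *)

From HB Require Import structures.
From mathcomp Require Import all_boot all_order all_algebra.
From mathcomp Require Import reals.
Set Implicit Arguments.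
Unset Strict Implicit.
Unset Printing Implicit Defensive.
Import Order.TTheory GRing.Theory Num.Theory.
Local Open Scope ring_scope.

Definition nonarch_abs (R : realType) (K : fieldType) (abs : K -> R) : Prop :=
  [/\ forall x, 0 <= abs x,
      forall x, abs x = 0 <-> x = 0,
      forall x y, abs (x * y) = abs x * abs y
    & forall x y, abs (x + y) <= Num.max (abs x) (abs y)].

Definition abs_complete (R : realType) (K : fieldType) (abs : K -> R) : Prop :=
  forall u : nat -> K,
    (forall eps : R, 0 < eps -> exists N, forall i j, (N <= i)%N -> (N <= j)%N ->
        abs (u i - u j) < eps) ->
    exists l : K, forall eps : R, 0 < eps -> exists N, forall i, (N <= i)%N ->
        abs (u i - l) < eps.

(* The data O = prod_t O_t, O_t in {Z, A}, A = F_q[theta] with F a      *)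
(* finite field of size q.  For each t: isZ t = true means O_t = Z      *)
(* with prime pZ t, and pi_t = pZ t ^ ex t; isZ t = false means         *)
(* O_t = A with monic irreducible vA t, pi_t = vA t ^ ex t.             *)
Record setup (F : finFieldType) := Setup {
  ncomp : nat;
  isZ : 'I_ncomp -> bool;
  pZ : 'I_ncomp -> nat;
  vA : 'I_ncomp -> {poly F};
  ex : 'I_ncomp -> nat }.
Arguments ncomp {F} s.
Arguments isZ {F} s t.
Arguments pZ {F} s t.
Arguments vA {F} s t.
Arguments ex {F} s t.

Definition valid_setup (F : finFieldType) (S : setup F) : Prop :=
  [/\ forall t, isZ S t -> prime (pZ S t),
      forall t, ~~ isZ S t -> vA S t \is monic /\ irreducible_poly (vA S t)
    & forall t, (0 < ex S t)%N].

Definition piZ (F : finFieldType) (S : setup F) (t : 'I_(ncomp S)) : nat :=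
  (pZ S t ^ ex S t)%N.
Definition piA (F : finFieldType) (S : setup F) (t : 'I_(ncomp S)) : {poly F} :=
  vA S t ^+ ex S t.
Arguments piZ {F} S t.
Arguments piA {F} S t.

(* Digits of the pi_t-adic expansion: integers 0 <= d < pi_t (case Z),  *)
(* polynomials of degree < deg pi_t (case A).                           *)
Definition digit (F : finFieldType) (S : setup F) (t : 'I_(ncomp S)) : Type :=
  if isZ S t then 'I_(piZ S t)
  else {a : {poly F} | (size a < size (piA S t))%N}.
Arguments digit {F} S t.

(* An element x_t of Obar_t = Z_{p_t} resp. A_{v_t} is identified with its  *)
(* (unique) digit sequence x_t = sum_i x_{t,i} pi_t^i; Obar = prod_t Obar_t. *)
Definition Obar (F : finFieldType) (S : setup F) : Type :=
  forall t : 'I_(ncomp S), nat -> digit S t.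

Definition phi (F : finFieldType) (S : setup F) (x : Obar S) : Obar S :=
  fun t i => x t i.+1.

(* Continuity for the (pi-adic = product) topology on Obar: the cylinder *)
(* sets {y | y_{t,i} = x_{t,i} for all t and i < N} form a neighbourhood *)
(* base of x.                                                           *)
Definition continuousK (F : finFieldType) (S : setup F) (R : realType)
    (K : fieldType) (abs : K -> R) (f : Obar S -> K) : Prop :=
  forall x : Obar S, forall eps : R, 0 < eps -> exists N : nat,
    forall y : Obar S, (forall t i, (i < N)%N -> y t i = x t i) ->
      abs (f y - f x) < eps.

(* The infinity-adic absolute value |f/g| = q^(deg f - deg g) on k,     *)
(* for g <> 0 (and |0| = 0), with q = #|F|.                              *)
Definition absinf (F : finFieldType) (f g : {poly F}) : rat :=
  if f == 0 then 0
  else (#|F|%:R : rat) ^ ((size f)%:Z - (size g)%:Z).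

(* For x with phi^(n) x = x (n >= 1): x_t = a / (1 - pi_t^n) where      *)
(* a = sum_{i<n} x_{t,i} pi_t^i; `small S x n t` says |x_t| < 1 (real   *)
(* absolute value on Q, resp. infinity-adic absolute value on k).       *)
Definition small (F : finFieldType) (S : setup F) (x : Obar S) (n : nat)
    (t : 'I_(ncomp S)) : Prop :=
  (if isZ S t as b return
      (nat -> if b then 'I_(piZ S t)
              else {a : {poly F} | (size a < size (piA S t))%N}) -> Prop
   then fun d =>
     `| (\sum_(i < n) ((d i : nat)%:R * (piZ S t ^ i)%:R))
          / (1 - (piZ S t ^ n)%:R) : rat | < 1
   else fun d =>
     absinf (\sum_(i < n) sval (d i) * piA S t ^+ i) (1 - piA S t ^+ n) < 1)
  (x t).

From HB Require Import structures.
From mathcomp Require Import all_boot all_order all_algebra.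
From mathcomp Require Import reals boolp.
From mathcomp Require Import zify ring lra.
Set Implicit Arguments.
Unset Strict Implicit.
Unset Printing Implicit Defensive.
Import Order.TTheory GRing.Theory Num.Theory.
Local Open Scope ring_scope.

(* A Livsic-type argument. Let 0 be the zero digit: every periodic point whose
   digits start with 0 is small, so its orbit product is 1; in particular
   F(000...) = 1. By continuity of F at 000... and completeness of K, the
   products F(0 y) F(00 y) ... F(0^L y) converge to some H(y) != 0, and H is
   continuous. Comparing the orbits of the periodic points (0^L x_0 ... x_m)^oo
   and (0^L x_1 ... x_m)^oo for large L and m yields H(phi x) = F(x) H(x), so
   G = 1/H works. *)

Lemma sum_digits_lt (p n : nat) (d : nat -> nat) :
  (forall i, d i < p)%N -> (\sum_(i < n) d i * p ^ i < p ^ n)%N.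
Proof.
move=> hd; elim: n => [|n IH]; first by rewrite big_ord0 expn0.
rewrite big_ord_recr /= expnS.
move: IH (hd n); move: (\sum_(i < n) _)%N (d n) (p ^ n)%N => s a P; nia.
Qed.

Lemma sum_digits_le (p n : nat) (d : nat -> nat) :
  (forall i, d i < p)%N -> d 0%N = 0%N -> (0 < n)%N ->
  (\sum_(i < n) d i * p ^ i <= p ^ n - p)%N.
Proof.
case: n => // n hd d0 _; rewrite big_ord_recl d0 mul0n add0n expnS.
have -> : (\sum_(i < n) d (bump 0 i) * p ^ bump 0 i = p * \sum_(i < n) d i.+1 * p ^ i)%N.
  by rewrite big_distrr; apply: eq_bigr => i _; rewrite expnS mulnCA.
have := sum_digits_lt n (fun i => hd i.+1); nia.
Qed.

Lemma small_digitsZ (p n : nat) (d : nat -> nat) :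
  (1 < p)%N -> (0 < n)%N -> (forall i, d i < p)%N -> d 0%N = 0%N ->
  `| (\sum_(i < n) ((d i)%:R * (p ^ i)%:R)) / (1 - (p ^ n)%:R) : rat | < 1.
Proof.
move=> p1 n0 hd d0.
under eq_bigr do rewrite -natrM.
rewrite -natr_sum.
have := sum_digits_le hd d0 n0.
have : (p <= p ^ n)%N by rewrite -{1}(expn1 p) leq_pexp2l // ltnW.
move: (\sum_(i < n) _)%N (p ^ n)%N => s P hpP hs.
have h2 : (s.+2 <= P)%N by lia.
have : (s%:R : rat) + 2 <= P%:R by rewrite -[2]/(2%:R : rat) -natrD ler_nat addn2.
move: (ler0n rat s) => s0 hsP.
rewrite normf_div ger0_norm // ler0_norm; last by lra.
rewrite ltr_pdivrMr; lra.
Qed.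

Lemma absinf_lt1 (Fq : finFieldType) (f g : {poly Fq}) :
  (size f < size g)%N -> absinf f g < 1.
Proof.
move=> hfg; rewrite /absinf; case: ifP => // _.
have -> : ((size f)%:Z - (size g)%:Z = Negz (size g - (size f).+1))%R.
  by rewrite NegzE; lia.
have hq : 1 < (#|Fq|%:R : rat) by rewrite ltr1n card_finNzRing_gt1.
rewrite invf_lt1; last by rewrite exprn_gt0 // (lt_trans ltr01).
by rewrite exprn_egt1.
Qed.

Lemma small_digitsA (Fq : finFieldType) (P : {poly Fq}) n (d : nat -> {poly Fq}) :
  (1 < size P)%N -> (0 < n)%N -> (forall i, size (d i) < size P)%N ->
  absinf (\sum_(i < n) d i * P ^+ i) (1 - P ^+ n) < 1.
Proof.
move=> P1 n0 hd; apply: absinf_lt1.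
have P0 : P != 0 by rewrite -size_poly_gt0 ltnW.
set m := (size P).-1.
have m0 : (0 < m)%N by rewrite /m -ltnS prednK // ltnW.
have szX i : size (P ^+ i) = (m * i).+1.
  by rewrite -size_exp prednK // size_poly_gt0 expf_neq0.
have -> : size (1 - P ^+ n) = (m * n).+1.
  by rewrite addrC size_polyDl size_polyN szX // size_poly1 ltnS muln_gt0 m0.
rewrite ltnS; apply: leq_trans (size_sum _ _ _) _; apply/bigmax_leqP => i _.
apply: leq_trans (size_polyMleq _ _) _.
have : (size (d i) <= m)%N by rewrite -ltnS prednK ?hd // ltnW.
have := ltn_ord i; rewrite szX; nia.
Qed.

(* [small x n t] only depends on the digit sequence [x t]; stating it for an
   arbitrary sequence [d] permits case analysis on [isZ S t]. *)
Definition small_digits (Fq : finFieldType) (S : setup Fq) (t : 'I_(ncomp S))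
    (d : nat -> digit S t) (n : nat) : Prop :=
  (if isZ S t as b return
      (nat -> if b then 'I_(piZ S t)
              else {a : {poly Fq} | (size a < size (piA S t))%N}) -> Prop
   then fun d =>
     `| (\sum_(i < n) ((d i : nat)%:R * (piZ S t ^ i)%:R))
          / (1 - (piZ S t ^ n)%:R) : rat | < 1
   else fun d =>
     absinf (\sum_(i < n) sval (d i) * piA S t ^+ i) (1 - piA S t ^+ n) < 1) d.

Lemma zero_digit_small (Fq : finFieldType) (S : setup Fq) t :
  valid_setup S ->
  {z : digit S t | forall d n, (0 < n)%N -> d 0%N = z -> small_digits d n}.
Proof.
case=> hZ hA hex; rewrite /small_digits /digit.
have ex0 : (0 < ex S t)%N := hex t.
case E: (isZ S t).
  have p1 : (1 < piZ S t)%N.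
    by rewrite /piZ -(exp1n (ex S t)) ltn_exp2r // prime_gt1 // hZ.
  exists (Ordinal (ltnW p1)) => d n n0 d0.
  by apply: (small_digitsZ (d := fun i => d i)) => //; rewrite d0.
have [Pm Pirr] : vA S t \is monic /\ irreducible_poly (vA S t) by apply: hA; rewrite E.
have P1 : (1 < size (piA S t))%N.
  have := size_exp (vA S t) (ex S t); have := Pirr.1.
  have : (0 < size (piA S t))%N by rewrite size_poly_gt0 expf_neq0 ?monic_neq0.
  rewrite /piA; move: (size _) (size _) => a b; nia.
have sz0 : (size (0%R : {poly Fq}) < size (piA S t))%N by rewrite size_poly0 ltnW.
exists (exist _ 0 sz0) => d n n0 _.
by apply: (small_digitsA (d := fun i => sval (d i))) => // i; apply: (svalP (d i)).
Qed.

Section NonArchimedean.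
Variables (R : realType) (K : fieldType) (abs : K -> R).
Hypothesis habs : nonarch_abs abs.

Lemma abs_ge0 x : 0 <= abs x. Proof. by case: habs. Qed.
Lemma abs0 : abs 0 = 0. Proof. by case: habs => _ h _ _; apply/h. Qed.
Lemma absM x y : abs (x * y) = abs x * abs y. Proof. by case: habs. Qed.
Lemma absD x y : abs (x + y) <= Num.max (abs x) (abs y). Proof. by case: habs. Qed.

Lemma abs_gt0 x : x != 0 -> 0 < abs x.
Proof.
move=> x0; rewrite lt_def abs_ge0 andbT; apply: contra x0 => /eqP.
by case: habs => _ h _ _ /h ->.
Qed.

Lemma abs1 : abs 1 = 1.
Proof.
have a1 : abs 1 != 0 := lt0r_neq0 (abs_gt0 (oner_neq0 K)).
by apply: (mulfI a1); rewrite -absM !mulr1.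
Qed.

Lemma absV x : abs x^-1 = (abs x)^-1.
Proof.
have [->|x0] := eqVneq x 0; first by rewrite invr0 abs0 invr0.
by apply: (mulfI (lt0r_neq0 (abs_gt0 x0))); rewrite -absM !mulfV ?abs1 ?lt0r_neq0 ?abs_gt0.
Qed.

Lemma absN x : abs (- x) = abs x.
Proof.
have h : abs (-1) ^+ 2 = 1 by rewrite expr2 -absM mulrNN mulr1 abs1.
have hN1 : abs (-1) = 1.
  by move/eqP: h; rewrite sqrf_eq1 => /orP [/eqP //| /eqP h1]; have := abs_ge0 (-1); lra.
by rewrite -mulN1r absM hN1 mul1r.
Qed.

Lemma absB x y : abs (x - y) = abs (y - x).
Proof. by rewrite -absN opprB. Qed.

Lemma abs_subr_lt e x y : abs x < e -> abs y < e -> abs (x - y) < e.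
Proof. by move=> hx hy; apply: le_lt_trans (absD _ _) _; rewrite gt_max absN hx hy. Qed.

Lemma abs_eq_of_lt x y : abs (x - y) < abs y -> abs x = abs y.
Proof.
move=> h; apply/eqP; rewrite eq_le; apply/andP; split.
  by have := absD (x - y) y; rewrite subrK => /le_trans; apply; rewrite ge_max lexx ltW.
have := absD (y - x) x; rewrite subrK absB le_max => /orP [/(lt_le_trans h)|//].
by rewrite ltxx.
Qed.

Definition near1 (e : R) (a : K) := abs (a - 1) < e.

Lemma near1_divP e a b : b != 0 -> near1 e (a / b) <-> abs (a - b) < e * abs b.
Proof.
move=> b0; rewrite /near1 -[X in a / b - X](mulfV b0) -mulrBl absM absV.
by rewrite ltr_pdivrMr // abs_gt0.
Qed.

Lemma near1_1 e : 0 < e -> near1 e 1.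
Proof. by rewrite /near1 subrr abs0. Qed.

Section SmallRadius.
Variable e : R.
Hypothesis e1 : e <= 1.

Lemma near1_abs a : near1 e a -> abs a = 1.
Proof. by move=> h; rewrite -abs1; apply: abs_eq_of_lt; rewrite abs1 (lt_le_trans h). Qed.

Lemma near1_neq0 a : near1 e a -> a != 0.
Proof.
by move=> /near1_abs; apply: contraPneq => ->; rewrite abs0; apply/eqP; rewrite eq_sym oner_eq0.
Qed.

Lemma near1M a b : near1 e a -> near1 e b -> near1 e (a * b).
Proof.
move=> ha hb; rewrite /near1 (_ : a * b - 1 = a * (b - 1) + (a - 1)); last by ring.
by apply: le_lt_trans (absD _ _) _; rewrite gt_max absM (near1_abs ha) mul1r; apply/andP.
Qed.

Lemma near1V a : near1 e a -> near1 e a^-1.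
Proof.
move=> ha; rewrite /near1 (_ : a^-1 - 1 = a^-1 * (1 - a)); last first.
  by rewrite mulrBr mulr1 mulVf // near1_neq0.
by rewrite absM absV (near1_abs ha) invr1 mul1r absB.
Qed.

Lemma near1_div a b : near1 e a -> near1 e b -> near1 e (a / b).
Proof. by move=> ha hb; apply: near1M => //; apply: near1V. Qed.

Lemma near1_prod n (f : 'I_n -> K) : 0 < e -> (forall i, near1 e (f i)) ->
  near1 e (\prod_(i < n) f i).
Proof.
by move=> e0 hf; apply: (big_ind (near1 e)) => //; [apply: near1_1 | apply: near1M].
Qed.

End SmallRadius.

Lemma near1_eq1 a : (forall e, 0 < e -> e <= 1 -> near1 e a) -> a = 1.
Proof.
move=> h; apply/eqP; rewrite -subr_eq0; apply: contraT => a1.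
have a1_gt0 := abs_gt0 a1.
have := h (Num.min (abs (a - 1)) 1); rewrite lt_min a1_gt0 ltr01 ge_min lexx orbT.
by move=> /(_ isT isT); rewrite /near1 lt_min ltxx.
Qed.

Lemma near1_div_abs e a b : e <= 1 -> b != 0 -> near1 e (a / b) -> abs a = abs b.
Proof.
move=> e1 b0 /(near1_divP _ _ b0) h; apply: abs_eq_of_lt.
by apply: lt_le_trans h _; rewrite ler_piMl ?abs_ge0.
Qed.

Hypothesis hcomp : abs_complete abs.

Lemma ratio_cauchy_limit (u : nat -> K) :
  (forall n, u n != 0) ->
  (forall e, 0 < e -> e <= 1 -> exists N, forall m n,
     (N <= m)%N -> (m <= n)%N -> near1 e (u n / u m)) ->
  exists2 l, l != 0 & forall e, 0 < e -> e <= 1 ->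
    exists N, forall n, (N <= n)%N -> near1 e (u n / l).
Proof.
move=> u0 hu; have [N1 hN1] := hu 1 ltr01 (lexx 1).
set C := abs (u N1); have C0 : 0 < C by apply: abs_gt0.
have absu n : (N1 <= n)%N -> abs (u n) = C.
  by move=> hn; apply: (near1_div_abs (lexx 1) (u0 N1)); apply: hN1.
have [l hl] : exists l, forall eps, 0 < eps -> exists N, forall n, (N <= n)%N ->
    abs (u n - l) < eps.
  apply: hcomp => eps eps0.
  pose e := Num.min 1 (eps / C).
  have e0 : 0 < e by rewrite lt_min ltr01 divr_gt0.
  have e1 : e <= 1 by rewrite ge_min lexx.
  have [N2 hN2] := hu e e0 e1.
  pose N := maxn N1 N2; exists N => i j hi hj.
  have near_uN k : (N <= k)%N -> abs (u k - u N) < eps.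
    move=> hk; apply: lt_le_trans (_ : e * C <= eps).
      rewrite -(absu N) ?leq_maxl //; apply/near1_divP => //.
      by apply: hN2; rewrite ?leq_maxr.
    by rewrite -ler_pdivlMr // ge_min lexx orbT.
  rewrite (_ : u i - u j = (u i - u N) - (u j - u N)); last by ring.
  by apply: abs_subr_lt; apply: near_uN.
have absl : abs l = C.
  have [N hN] := hl C C0; pose n := maxn N N1.
  rewrite -(absu n) ?leq_maxr //; apply: abs_eq_of_lt.
  by rewrite absB absu ?leq_maxr //; apply: hN; rewrite leq_maxl.
have l0 : l != 0.
  by apply: contraPneq absl => ->; rewrite abs0; apply/eqP; rewrite eq_sym lt0r_neq0.
exists l => // e e0 e1; have [N hN] := hl (e * C) (mulr_gt0 e0 C0).
by exists N => n hn; apply/near1_divP => //; rewrite absl; apply: hN.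
Qed.

End NonArchimedean.

Lemma ex_uniform_bound (P : nat -> nat -> Prop) n :
  (forall k N N', (N <= N')%N -> P k N -> P k N') ->
  (forall k, (k < n)%N -> exists N, P k N) -> exists N, forall k, (k < n)%N -> P k N.
Proof.
move=> Pmono; elim: n => [|n IH] hP; first by exists 0%N.
have [N1 h1] := IH (fun k hk => hP k (ltnW hk)).
have [N2 h2] := hP n (ltnSn n).
exists (maxn N1 N2) => k; rewrite ltnS leq_eqVlt => /orP [/eqP ->|hk].
  exact: Pmono (leq_maxr _ _) h2.
exact: Pmono (leq_maxl _ _) (h1 k hk).
Qed.

Section Shift.
Variables (Fq : finFieldType) (S : setup Fq) (z0 : forall t, digit S t).
Implicit Types (x y q : Obar S).
Local Notation phi := (@phi Fq S).

Definition agree N x y := forall t i, (i < N)%N -> y t i = x t i.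

Definition zeros : Obar S := fun t _ => z0 t.
Definition zpad k y : Obar S := fun t i => if (i < k)%N then z0 t else y t (i - k)%N.
Definition ztrunc m y : Obar S := fun t i => if (i < m)%N then y t i else z0 t.
Definition zcycle L m y : Obar S := fun t i => zpad L y t (i %% (L + m))%N.

Lemma agree_le N N' x y : (N <= N')%N -> agree N' x y -> agree N x y.
Proof. by move=> hN h t i hi; apply: h (leq_trans hi hN). Qed.

Lemma agree_trans N x y q : agree N x y -> agree N y q -> agree N x q.
Proof. by move=> hxy hyq t i hi; rewrite hyq ?hxy. Qed.

Lemma iter_phiE j x t i : iter j phi x t i = x t (i + j)%N.
Proof. by elim: j i => [|j IH] i; rewrite ?addn0 // iterS /phi IH addSnnS. Qed.

Lemma agree_iter_phi N j x y : agree (N + j) x y -> agree N (iter j phi x) (iter j phi y).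
Proof. by move=> h t i hi; rewrite !iter_phiE h ?ltn_add2r. Qed.

Lemma iter_phi_zpad j L y : (j <= L)%N -> iter j phi (zpad L y) = zpad (L - j) y.
Proof.
move=> hj; apply: functional_extensionality_dep => t; apply: funext => i.
rewrite iter_phiE /zpad (_ : (i + j < L)%N = (i < L - j)%N); last by lia.
by case: ifP => // _; congr (y t _); lia.
Qed.

Lemma agree_zeros_zpad N k y : (N <= k)%N -> agree N zeros (zpad k y).
Proof. by move=> hk t i hi; rewrite /zpad ifT // (leq_trans hi hk). Qed.

Lemma agree_zpad N k x y : agree N x y -> agree (k + N) (zpad k x) (zpad k y).
Proof.
by move=> h t i hi; rewrite /zpad; case: ltnP => // hk; apply: h; lia.
Qed.

Lemma agree_ztrunc m y : agree m y (ztrunc m y).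
Proof. by move=> t i hi; rewrite /ztrunc hi. Qed.

Lemma zcycle_head L m y t : (0 < L)%N -> zcycle L m y t 0%N = z0 t.
Proof. by move=> L0; rewrite /zcycle mod0n /zpad L0. Qed.

Lemma zcycle_periodic L m y : iter (L + m) phi (zcycle L m y) = zcycle L m y.
Proof.
apply: functional_extensionality_dep => t; apply: funext => i.
by rewrite iter_phiE /zcycle modnDr.
Qed.

Lemma agree_zcycle L m y : agree (L + m) (zpad L y) (zcycle L m y).
Proof. by move=> t i hi; rewrite /zcycle modn_small. Qed.

Lemma agree_iter_zcycle L m k y :
  agree (m + L) (ztrunc m (iter k phi y)) (iter (k + L) phi (zcycle L (k + m) y)).
Proof.
move=> t d hd; rewrite iter_phiE /zcycle /ztrunc /zpad iter_phiE.
have [dm|md] := ltnP d m.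
  by rewrite modn_small ?ifN; [congr (y t _) | rewrite -leqNgt | ]; lia.
have -> : ((d + (k + L)) %% (L + (k + m)) = d - m)%N.
  by rewrite (_ : d + (k + L) = d - m + (L + (k + m)))%N ?modnDr ?modn_small; lia.
by rewrite ifT //; lia.
Qed.

End Shift.

Section RatioContinuity.
Variables (Fq : finFieldType) (S : setup Fq) (R : realType) (K : fieldType) (abs : K -> R).
Hypothesis habs : nonarch_abs abs.
Implicit Types f : Obar S -> K.

Definition ratio_continuous f := forall x e, 0 < e -> e <= 1 ->
  exists N, forall y, agree N x y -> near1 abs e (f y / f x).

Lemma continuousK_ratio f : (forall x, f x != 0) ->
  continuousK abs f <-> ratio_continuous f.
Proof.
move=> f0; split=> hf x.
  move=> e e0 _; have [N hN] := hf x _ (mulr_gt0 e0 (abs_gt0 habs (f0 x))).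
  by exists N => y hy; apply/(near1_divP habs) => //; apply: hN.
move=> eps eps0; have fx0 := abs_gt0 habs (f0 x).
pose e := Num.min 1 (eps / abs (f x)).
have e0 : 0 < e by rewrite lt_min ltr01 divr_gt0.
have e1 : e <= 1 by rewrite ge_min lexx.
have [N hN] := hf x e e0 e1.
exists N => y /hN /(near1_divP habs _ _ (f0 x)) h; apply: lt_le_trans h _.
by rewrite -ler_pdivlMr // ge_min lexx orbT.
Qed.

Lemma ratio_continuousV f : (forall x, f x != 0) ->
  ratio_continuous f -> ratio_continuous (fun x => (f x)^-1).
Proof.
move=> f0 hf x e e0 e1; have [N hN] := hf x e e0 e1.
by exists N => y /hN /(near1V habs e1); rewrite invf_div invrK mulrC.
Qed.

End RatioContinuity.

Section Coboundary.
Variables (Fq : finFieldType) (S : setup Fq) (z0 : forall t, digit S t).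
Variables (R : realType) (K : fieldType) (abs : K -> R) (F : Obar S -> K).
Hypotheses (habs : nonarch_abs abs) (hcomp : abs_complete abs).
Hypotheses (hcont : continuousK abs F) (hF0 : forall x, F x != 0).
Implicit Types (x y q : Obar S).
Local Notation phi := (@phi Fq S).
Local Notation near1 := (near1 abs).
Local Notation zeros := (zeros z0).
Local Notation zpad := (zpad z0).
Local Notation ztrunc := (ztrunc z0).
Local Notation zcycle := (zcycle z0).

Definition orbit_prod n x := \prod_(j < n) F (iter j phi x).

Hypothesis F_periodic : forall n x, (0 < n)%N -> (forall t, x t 0%N = z0 t) ->
  iter n phi x = x -> orbit_prod n x = 1.

Lemma orbit_prod_neq0 n x : orbit_prod n x != 0.
Proof. exact/prodf_neq0. Qed.

Lemma orbit_prodD a b x :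
  orbit_prod (a + b) x = orbit_prod a x * orbit_prod b (iter a phi x).
Proof.
rewrite /orbit_prod big_split_ord; congr (_ * _).
by apply: eq_bigr => j _; rewrite /= addnC iterD.
Qed.

Lemma orbit_prodS n x : orbit_prod n.+1 x = F x * orbit_prod n (phi x).
Proof.
rewrite /orbit_prod big_ord_recl; congr (_ * _).
by apply: eq_bigr => j _; rewrite lift0 iterSr.
Qed.

Lemma orbit_prod_zcycle L m y : (0 < L)%N -> orbit_prod (L + m) (zcycle L m y) = 1.
Proof.
move=> L0; apply: F_periodic; first by rewrite addn_gt0 L0.
  by move=> t; apply: zcycle_head.
exact: zcycle_periodic.
Qed.

Lemma F_zeros : F zeros = 1.
Proof.
have := @F_periodic 1 zeros isT (fun t => erefl).
by rewrite /orbit_prod big_ord1; apply.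
Qed.

Lemma F_ratio_continuous : ratio_continuous abs F.
Proof. exact/(continuousK_ratio habs hF0). Qed.

Lemma F_near1_agree c e : 0 < e -> e <= 1 -> exists N, forall y y',
  agree N c y -> agree N c y' -> near1 e (F y / F y').
Proof.
move=> e0 e1; have [N hN] := F_ratio_continuous c e0 e1.
exists N => y y' hy hy'.
rewrite (_ : F y / F y' = (F y / F c) / (F y' / F c)); last by field; rewrite !hF0.
by apply: near1_div => //; apply: hN.
Qed.

Lemma orbit_prod_ratio_continuous m : ratio_continuous abs (orbit_prod m).
Proof.
move=> c e e0 e1.
have [N hN] : exists N, forall i, (i < m)%N -> forall y,
    agree N (iter i phi c) y -> near1 e (F y / F (iter i phi c)).
  apply: ex_uniform_bound => [i N N' hN h y /(agree_le hN)|i _]; first exact: h.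
  exact: F_ratio_continuous.
exists (N + m)%N => q hq; rewrite /orbit_prod -prodf_div; apply: near1_prod => // i.
by apply: hN => //; apply: agree_iter_phi; apply: agree_le hq; rewrite leq_add2l ltnW.
Qed.

Definition zprod L y := orbit_prod L (zpad L y).

Lemma zprod_neq0 L y : zprod L y != 0.
Proof. exact: orbit_prod_neq0. Qed.

Lemma zprodS L y : zprod L.+1 y = F (zpad L.+1 y) * zprod L y.
Proof. by rewrite /zprod orbit_prodS (iter_phi_zpad z0 y (ltn0Sn L) : phi _ = _) subn1. Qed.

Lemma zprod_ratio_cauchy y e : 0 < e -> e <= 1 -> exists N, forall L M,
  (N <= L)%N -> (L <= M)%N -> near1 e (zprod M y / zprod L y).
Proof.
move=> e0 e1; have [N hN] := F_ratio_continuous zeros e0 e1.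
exists N => L M hL /subnK <-; elim: (M - L)%N => [|d IH].
  by rewrite add0n mulfV ?zprod_neq0 //; apply: near1_1.
rewrite addSn zprodS -mulrA; apply: near1M => //.
by rewrite -[F _]divr1 -F_zeros; apply: hN; apply: agree_zeros_zpad; lia.
Qed.

Definition Hlim y : K :=
  s2val (cid2 (ratio_cauchy_limit habs hcomp (zprod_neq0^~ y) (zprod_ratio_cauchy y))).

Lemma Hlim_neq0 y : Hlim y != 0.
Proof. by rewrite /Hlim; case: cid2. Qed.

Lemma zprod_near_Hlim y e : 0 < e -> e <= 1 ->
  exists N, forall L, (N <= L)%N -> near1 e (zprod L y / Hlim y).
Proof. by move: e; rewrite /Hlim; case: cid2. Qed.

Lemma orbit_prod_near_zprod y e : 0 < e -> e <= 1 -> exists M, forall m L q,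
  (M <= m)%N -> agree (L + m) (zpad L y) q -> near1 e (orbit_prod L q / zprod L y).
Proof.
move=> e0 e1; have [Nz hNz] := F_near1_agree zeros e0 e1.
have [M hM] : exists M, forall k, (k < Nz)%N -> forall q,
    agree (k + M) (zpad k y) q -> near1 e (F q / F (zpad k y)).
  apply: ex_uniform_bound => [k N N' hN h q hq|k _].
    by apply: h; apply: agree_le hq; rewrite leq_add2l.
  have [N hN] := F_ratio_continuous (zpad k y) e0 e1.
  by exists N => q /(agree_le (leq_addl _ _)); apply: hN.
exists M => m L q hm hq; rewrite /zprod /orbit_prod -prodf_div.
apply: near1_prod => // j; rewrite iter_phi_zpad 1?ltnW //.
have hqj : agree (L - j + m) (zpad (L - j) y) (iter j phi q).
  rewrite -(iter_phi_zpad z0 y (ltnW (ltn_ord j))).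
  by apply: agree_iter_phi; apply: agree_le hq; have := ltn_ord j; lia.
have [hk|hk] := ltnP (L - j) Nz.
  by apply: hM => //; apply: agree_le hqj; rewrite leq_add2l.
apply: hNz; last exact: agree_zeros_zpad.
apply: agree_trans (agree_zeros_zpad _ _ hk) (agree_le _ hqj); lia.
Qed.

Lemma orbit_prod_near_Hlim y e : 0 < e -> e <= 1 -> exists M L0, forall m L q,
  (M <= m)%N -> (L0 <= L)%N -> agree (L + m) (zpad L y) q ->
  near1 e (orbit_prod L q / Hlim y).
Proof.
move=> e0 e1; have [M hM] := orbit_prod_near_zprod y e0 e1.
have [L0 hL0] := zprod_near_Hlim y e0 e1.
exists M, L0 => m L q hm hL hq.
rewrite -(divfK (zprod_neq0 L y) (orbit_prod L q)) -(mulrA (_ / _)).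
by apply: near1M => //; [apply: hM hm hq | apply: hL0 hL].
Qed.

Lemma Hlim_ratio_continuous : ratio_continuous abs Hlim.
Proof.
move=> x e e0 e1; have [M [L0 hx]] := orbit_prod_near_Hlim x e0 e1.
exists M => y hy; have [L1 hy1] := zprod_near_Hlim y e0 e1.
pose L := maxn L0 L1.
have hyx : near1 e (zprod L y / Hlim x).
  by apply: hx (leqnn M) (leq_maxl _ _) _; apply: agree_zpad.
rewrite -(divfK (zprod_neq0 L y) (Hlim y)) -(mulrA (_ / _)) mulrC.
by rewrite -(invf_div (zprod L y)); apply: near1_div => //; apply: hy1; apply: leq_maxr.
Qed.

Lemma Hlim_cocycle x : Hlim (phi x) = F x * Hlim x.
Proof.
apply/divr1_eq/(near1_eq1 habs) => e e0 e1.
have [M1 [L1 hx]] := orbit_prod_near_Hlim x e0 e1.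
have [M2 [L2 hphix]] := orbit_prod_near_Hlim (phi x) e0 e1.
have [Nx hNx] := F_ratio_continuous x e0 e1.
pose m := maxn Nx (maxn M1 M2); pose c := ztrunc m (phi x).
have [N hN] := orbit_prod_ratio_continuous m c e0 e1.
pose L := maxn (maxn L1 L2) N.+1.
have L0 : (0 < L)%N by rewrite leq_max ltn0Sn orbT.
(* Both orbit products are 1; their first L factors approximate H x and
   H (phi x), and the remaining ones agree except for the factor F x. *)
pose P1 := zcycle L m.+1 x; pose P2 := zcycle L m (phi x).
pose O1 := orbit_prod L P1; pose B := F (iter L phi P1).
pose T1 := orbit_prod m (iter L.+1 phi P1).
pose O2 := orbit_prod L P2; pose T2 := orbit_prod m (iter L phi P2).
pose Oc := orbit_prod m c.
have orbit1 : O1 * (B * T1) = 1 by rewrite -orbit_prodS -orbit_prodD orbit_prod_zcycle.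
have orbit2 : O2 * T2 = 1 by rewrite -orbit_prodD orbit_prod_zcycle.
have nO1 : near1 e (O1 / Hlim x).
  by apply: (hx _ _ _ _ _ (agree_zcycle z0 x)); rewrite /m /L; lia.
have nO2 : near1 e (O2 / Hlim (phi x)).
  by apply: (hphix _ _ _ _ _ (agree_zcycle z0 (phi x))); rewrite /m /L; lia.
have nB : near1 e (B / F x).
  apply/hNx/(agree_le (N' := m.+1)); first by rewrite /m; lia.
  by apply: agree_trans (agree_ztrunc z0 x) (agree_le _ (agree_iter_zcycle z0 0 x)); lia.
have nT1 : near1 e (T1 / Oc).
  by apply/hN/(agree_le _ (agree_iter_zcycle z0 1 x)); lia.
have nT2 : near1 e (T2 / Oc).
  by apply/hN/(agree_le _ (agree_iter_zcycle z0 0 (phi x))); lia.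
have -> : Hlim (phi x) / (F x * Hlim x) =
    (O1 / Hlim x * (B / F x) * (T1 / Oc)) / (O2 / Hlim (phi x) * (T2 / Oc)) *
    ((O2 * T2) / (O1 * (B * T1))).
  by field; rewrite !(Hlim_neq0, hF0, orbit_prod_neq0).
rewrite orbit1 orbit2 divr1 mulr1.
by apply: near1_div => //; apply: near1M => //; apply: near1M.
Qed.

End Coboundary.

Theorem mainTheorem4 (Fq : finFieldType) (S : setup Fq) (R : realType)
    (K : fieldType) (abs : K -> R) (F : Obar S -> K) :
  valid_setup S ->
  nonarch_abs abs -> abs_complete abs ->
  continuousK abs F -> (forall x, F x != 0) ->
  (forall (n : nat) (x : Obar S), (0 < n)%N ->
     (forall t, small x n t) ->
     iter n (@phi Fq S) x = x ->
     \prod_(j < n) F (iter j (@phi Fq S) x) = 1) ->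
  exists G : Obar S -> K,
    [/\ continuousK abs G, (forall x, G x != 0)
      & forall x, F x = G x / G (phi x)].
Proof.
move=> hv habs hcomp hcont hF0 hper.
pose z0 t := sval (zero_digit_small t hv).
have hper0 n x : (0 < n)%N -> (forall t, x t 0%N = z0 t) -> iter n (@phi Fq S) x = x ->
    orbit_prod F n x = 1.
  by move=> n0 hx; apply: hper => // t; apply: (svalP (zero_digit_small t hv)).
pose H := Hlim habs hcomp hcont hF0 hper0.
have H0 x : H x != 0 by apply: Hlim_neq0.
have HV0 x : (H x)^-1 != 0 by rewrite invr_eq0.
exists (fun x => (H x)^-1); split => // [|x].
  apply/(continuousK_ratio habs HV0)/ratio_continuousV => //.
  exact: Hlim_ratio_continuous.
by rewrite /H Hlim_cocycle invrK mulrCA mulVf ?mulr1.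
Qed.
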